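(* Let $S$ be a finite set and let $\mathcal{I}\subseteq 2^S$ be a downset of the Boolean lattice $(2^S,\subseteq)$ (i.e., $Y\subseteq X\in\mathcal{I}$ implies $Y\in\mathcal{I}$). Suppose that there exists $Z\in\mathcal{I}$ with $\hat\mu_{\mathcal{I}}(Z)=0$, and fix such a $Z$. Then $$\mathcal{I}\in \bullet\big(\{\,2^X \mid X\in \mathcal{I}\setminus\{Z\}\,\}\big),$$ where $2^X=\{Y\subseteq S\mid Y\subseteq X\}$ is the principal downset generated by $X$.
   Context: For a finite set $S$ and a configuration $\mathcal{C}\subseteq 2^S$, the generalized Möbius function $\hat\mu_{\mathcal{C}}:2^S\to\mathbb{Z}$ is defined by top-down induction: $\hat\mu_{\mathcal{C}}(X)=[X\in\mathcal{C}]-\sum_{X\subsetneq X'\subseteq S}\hat\mu_{\mathcal{C}}(X')$, where $[X\in\mathcal{C}]$ is $1$ if $X\in\mathcal{C}$ and $0$ otherwise. For sets $A,B$, the disjoint union $A\,\dot\cup\, B$ is $A\cup B$ and is defined only when $A\cap B=\emptyset$; the subset complement $A\,\dot\setminus\, B$ is $A\setminus B$ and is defined only when $B\subseteq A$. For a finite family $\mathcal{F}$ of sets, the partial dot-algebra $\bullet(\mathcal{F})$ is the smallest family of sets that contains $\emptyset$ and every member of $\mathcal{F}$ and is closed under all well-defined disjoint unions and subset complements of its members. Here the members of $\mathcal{F}$ are themselves sets of subsets of $S$, so $\bullet(\mathcal{F})$ consists of subsets of $2^S$. *)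

From mathcomp Require Import all_boot all_order all_algebra.
Set Implicit Arguments. Unset Strict Implicit. Unset Printing Implicit Defensive.
Import GRing.Theory.
Local Open Scope ring_scope.

(* The finite ground set S is modelled by a finType T; subsets of S are
   {set T}; configurations C ⊆ 2^S are {set {set T}}. *)

(* The fuel #|T|.+1 exceeds the length of every strictly increasing chain
   starting at X, so the recursion is exactly the paper's definition. *)
Fixpoint mobius_fuel (T : finType) (n : nat) (C : {set {set T}}) (X : {set T})
  : int :=
  match n with
  | 0%N => 0
  | n'.+1 => ((X \in C : bool)%:R : int)
             - \sum_(X' : {set T} | X \proper X') mobius_fuel n' C X'
  end.

Definition mobius (T : finType) (C : {set {set T}}) (X : {set T}) : int :=
  mobius_fuel #|T|.+1 C X.

Inductive dot_alg (T : finType) (F : {set {set {set T}}}) : {set {set T}} -> Prop :=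
  | dot_empty : dot_alg F set0
  | dot_gen A : A \in F -> dot_alg F A
  | dot_dunion A B : dot_alg F A -> dot_alg F B -> [disjoint A & B] ->
                     dot_alg F (A :|: B)
  | dot_sdiff A B : dot_alg F A -> dot_alg F B -> B \subset A ->
                    dot_alg F (A :\: B).

Definition is_downset (T : finType) (I : {set {set T}}) : Prop :=
  forall X Y : {set T}, X \in I -> Y \subset X -> Y \in I.

Definition principal (T : finType) (X : {set T}) : {set {set T}} := powerset X.

From mathcomp Require Import all_boot all_order all_algebra.
From mathcomp Require Import zify.
Set Implicit Arguments.
Unset Strict Implicit.
Unset Printing Implicit Defensive.
Import GRing.Theory Num.Theory.
Local Open Scope ring_scope.

(* Let I_Z be the members of I containing Z.  Inverting the top-down
   recursion on the Boolean lattice gives mu_I(Z) = sum_{Y in I_Z} (-1)^|Y\Z|,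
   so I_Z has as many members with |Y\Z| odd as even.  For X in I not
   containing Z, {X} lies in the dot-algebra, as 2^X minus the proper subsets
   of X (induction on X).  For W containing Z, the edge {W, W+x} is 2^(W+x) minus the
   pairs {V, V+x}, V a proper subset of W, each known by induction on W or a
   union of two singletons.  Chaining edges via
   {a,d} = ({a,b} ∪ {c,d}) \ {b,c} (a, b, c, d distinct) yields every pair of
   members of I_Z at odd symmetric distance; matching odd with even members
   splits I_Z into such pairs, and I is the disjoint union of I_Z and I \ I_Z. *)

Section Toggle.
Variable T : finType.
Implicit Types (x v : T) (X Y V : {set T}).

Definition toggle x V := if x \in V then V :\ x else x |: V.

Lemma in_toggle x V v : (v \in toggle x V) = (v == x) (+) (v \in V).
Proof.
by rewrite /toggle; case: ifP => xV; rewrite !inE; case: eqVneq => [->|] //=;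
  rewrite xV.
Qed.

Lemma toggleK x : involutive (toggle x).
Proof. by move=> V; apply/setP => v; rewrite !in_toggle addKb. Qed.

Lemma toggle_notin x V : x \notin V -> toggle x V = x |: V.
Proof. by rewrite /toggle => /negbTE ->. Qed.

Lemma toggle_set2 x V : [set V; toggle x V] = [set V :\ x; x |: (V :\ x)].
Proof.
rewrite /toggle; case: ifP => xV; first by rewrite setD1K // setUC.
by rewrite (setDidPl _) // disjoint_sym disjoints1 xV.
Qed.

Lemma sub_toggle x X V : x \notin X -> (X \subset toggle x V) = (X \subset V).
Proof.
move=> xX; apply/subsetP/subsetP => sXV v vX.
  have /negbTE vx : v != x by apply: contraNneq xX => <-.
  by have := sXV v vX; rewrite in_toggle vx.
have /negbTE vx : v != x by apply: contraNneq xX => <-.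
by rewrite in_toggle vx sXV.
Qed.

Lemma toggle_sub x V Y : x \in Y -> (toggle x V \subset Y) = (V \subset Y).
Proof.
move=> xY; apply/subsetP/subsetP => sVY v; have [->//|/negbTE vx] := eqVneq v x.
  by move=> vV; apply: sVY; rewrite in_toggle vx.
by rewrite in_toggle vx; apply: sVY.
Qed.

Lemma odd_card_setD_toggle x V Y :
  x \in Y -> odd #|Y :\: toggle x V| = ~~ odd #|Y :\: V|.
Proof.
move=> xY; rewrite (cardsD1 x (Y :\: V)) (cardsD1 x (Y :\: toggle x V)).
have -> : (Y :\: toggle x V) :\ x = (Y :\: V) :\ x.
  by apply/setP => v; rewrite !inE in_toggle; case: eqVneq.
rewrite !inE in_toggle eqxx xY !andbT !oddD !oddb.
by case: (x \in V); rewrite /= ?negbK.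
Qed.

End Toggle.

Section MobiusFormula.
Variables (T : finType) (C : {set {set T}}).

Lemma sum_sign_interval (X Y : {set T}) :
  \sum_(V : {set T} | (X \subset V) && (V \subset Y)) (-1) ^+ #|Y :\: V|
    = (X == Y)%:R :> int.
Proof.
have [<-|neqXY] := eqVneq X Y.
  rewrite (big_pred1 X) ?setDv ?cards0 // => V.
  by rewrite /= eq_sym eqEsubset.
have [sXY|nsXY] := boolP (X \subset Y); last first.
  by rewrite big_pred0 // => V; apply: contraNF nsXY => /andP[]; apply: subset_trans.
have [x] : exists x, x \in Y :\: X.
  apply/set0Pn; rewrite setD_eq0; apply: contra neqXY => sYX.
  by rewrite eqEsubset sXY.
rewrite inE => /andP[xX xY].
set S := (s in s = _).
suff /eqP : S = - S by rewrite -addr_eq0 -mulr2n mulrn_eq0 /= => /eqP.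
rewrite {1}/S (reindex_inj (can_inj (@toggleK _ x))) /= -sumrN.
apply: eq_big => V; first by rewrite sub_toggle // toggle_sub.
by rewrite -signr_odd odd_card_setD_toggle // signrN signr_odd.
Qed.

Local Notation mobius_sum X :=
  (\sum_(Y in C | X \subset Y) (-1) ^+ #|Y :\: X| : int).

Lemma sum_mobius_sum (X : {set T}) :
  \sum_(V : {set T} | X \subset V) mobius_sum V = (X \in C)%:R.
Proof.
rewrite (exchange_big_dep (mem C)) /=; last by move=> V Y _ /andP[].
rewrite (eq_bigr (fun Y => (X == Y)%:R)) => [|Y CY]; last first.
  by rewrite -sum_sign_interval; apply: eq_bigl => V; rewrite CY.
have [CX|nCX] := boolP (X \in C); last first.
  by rewrite big1 // => Y CY; case: eqVneq => // eqXY; rewrite eqXY CY in nCX.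
rewrite (bigD1 X) //= eqxx big1 ?addr0 // => Y /andP[_ /negbTE].
by rewrite eq_sym => ->.
Qed.

Lemma mobius_fuelE n (X : {set T}) :
  (#|T| - #|X| < n)%N -> mobius_fuel n C X = mobius_sum X.
Proof.
elim: n X => // n IHn X ltXn /=.
rewrite (eq_bigr (fun V : {set T} => mobius_sum V)) => [|V ltXV]; last first.
  by apply: IHn; have := proper_card ltXV; have := max_card V; lia.
have -> : \sum_(V : {set T} | X \proper V) mobius_sum V =
          \sum_(V : {set T} | (X \subset V) && (V != X)) mobius_sum V.
  by apply: eq_bigl => V; rewrite properEneq andbC eq_sym.
by rewrite -(sum_mobius_sum X) (bigD1 X) //= addrK.
Qed.

Lemma mobiusE (X : {set T}) :
  mobius C X = \sum_(Y in C | X \subset Y) (-1) ^+ #|Y :\: X|.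
Proof. by rewrite /mobius mobius_fuelE // ltnS leq_subr. Qed.

End MobiusFormula.

Section DotAlgebra.
Variables (T : finType) (F : {set {set {set T}}}).
Local Notation G := (dot_alg F).
Implicit Types A B : {set {set T}}.

Lemma dot_alg_split A B : B \subset A -> G B -> G (A :\: B) -> G A.
Proof.
move=> sBA GB GAB; rewrite -(setID A B) (setIidPr sBA).
by apply: dot_dunion => //; rewrite -setI_eq0 setIDA setDIl setDv set0I.
Qed.

Lemma dot_alg_peel (Q : {set {set T}} -> Prop) :
  (forall A, Q A -> A != set0 ->
     exists B, [/\ B != set0, B \subset A, G B & Q (A :\: B)]) ->
  forall A, Q A -> G A.
Proof.
move=> peel A; have [n] := ubnP #|A|; elim: n A => // n IHn A /ltnSE leAn QA.
have [->|nzA] := eqVneq A set0; first exact: dot_empty.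
have [B [/set0Pn[Y BY] sBA GB QAB]] := peel A QA nzA.
apply: (dot_alg_split sBA GB (IHn _ _ QAB)); apply: leq_trans leAn.
apply: proper_card; rewrite properEneq subsetDl andbT.
by apply/eqP => eqA; have := subsetP sBA Y BY; rewrite -eqA inE BY.
Qed.

Lemma dot_alg_singletons A : (forall Y, Y \in A -> G [set Y]) -> G A.
Proof.
move=> GA; apply: (dot_alg_peel (Q := fun A' => A' \subset A)) (subxx A).
move=> A' sA'A /set0Pn[Y A'Y]; exists [set Y]; split.
- by apply/set0Pn; exists Y; rewrite set11.
- by rewrite sub1set.
- exact: GA (subsetP sA'A _ A'Y).
- exact: subset_trans (subsetDl _ _) sA'A.
Qed.

Lemma dot_alg_orbits (sigma : {set T} -> {set T}) A :
  involutive sigma -> (forall Y, Y \in A -> sigma Y \in A) ->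
  (forall Y, Y \in A -> G [set Y; sigma Y]) -> G A.
Proof.
move=> sigmaK sigmaA GA.
pose Q A' := A' \subset A /\ forall Y, Y \in A' -> sigma Y \in A'.
apply: (dot_alg_peel (Q := Q)) (conj (subxx A) sigmaA) => A' [sA'A sigmaA'].
move=> /set0Pn[Y A'Y]; exists [set Y; sigma Y]; split.
- by apply/set0Pn; exists Y; rewrite !inE eqxx.
- by rewrite subUset !sub1set A'Y sigmaA'.
- exact: GA (subsetP sA'A _ A'Y).
split=> [|V]; first exact: subset_trans (subsetDl _ _) sA'A.
rewrite !inE negb_or => /andP[/andP[VY VsY] A'V].
rewrite sigmaA' // andbT negb_or; apply/andP; split.
  by apply: contra VsY => /eqP <-; rewrite sigmaK.
by apply: contra VY => /eqP/(can_inj sigmaK) ->.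
Qed.

Lemma dot_alg_path3 (a b c d : {set T}) : uniq [:: a; b; c; d] ->
  G [set a; b] -> G [set b; c] -> G [set c; d] -> G [set a; d].
Proof.
rewrite /= !inE !negb_or => /and4P[/and3P[ab ac ad] /andP[bc bd] cd _] Gab Gbc Gcd.
have -> : [set a; d] = ([set a; b] :|: [set c; d]) :\: [set b; c].
  apply/setP => v; rewrite !inE.
  have [->|va] := eqVneq v a; first by rewrite (negbTE ab) (negbTE ac).
  have [->|vd] := eqVneq v d; last by rewrite /= orbF andNb.
  by rewrite ![d == _]eq_sym (negbTE bd) (negbTE cd) orbT.
apply: (dot_sdiff (dot_dunion Gab Gcd _) Gbc).
  rewrite -setI_eq0; apply/eqP/setP => v; rewrite !inE.
  have [->|va] := eqVneq v a; first by rewrite (negbTE ac) (negbTE ad).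
  by have [->|vb] := eqVneq v b; first by rewrite (negbTE bc) (negbTE bd).
by rewrite subUset !sub1set !inE !eqxx !orbT.
Qed.

End DotAlgebra.

Section SymmetricDistance.
Variable T : finType.
Implicit Types (x : T) (X Y Z : {set T}).

Definition symdist X Y := (#|X :\: Y| + #|Y :\: X|)%N.

Lemma symdist_eq0 X Y : (symdist X Y == 0%N) = (X == Y).
Proof. by rewrite addn_eq0 !cards_eq0 !setD_eq0 eqEsubset. Qed.

Lemma symdistD1 x X Y : x \in X -> x \notin Y ->
  symdist X Y = (symdist (X :\ x) Y).+1.
Proof.
move=> xX xY; rewrite /symdist (cardsD1 x (X :\: Y)) !inE xX xY /= add1n addSn.
by congr (_ + _).+1; apply: eq_card => v; rewrite !inE; case: eqVneq => // ->;
  rewrite (negbTE xY) ?andbF.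
Qed.

Lemma symdistU1 x X Y : x \notin X -> x \in Y ->
  symdist X Y = (symdist (x |: X) Y).+1.
Proof.
move=> xX xY; rewrite /symdist (cardsD1 x (Y :\: X)) !inE xX xY /= add1n addnS.
by congr (_ + _).+1; apply: eq_card => v; rewrite !inE; case: eqVneq => // ->;
  rewrite ?xX ?xY.
Qed.

Lemma cardsD_split X Y Z : Z \subset Y ->
  #|X :\: Z| = (#|X :\: Y| + #|(X :&: Y) :\: Z|)%N.
Proof.
by move=> sZY; rewrite -(cardsID Y (X :\: Z)) addnC setIDAC setDDl (setUidPr sZY).
Qed.

Lemma odd_symdist X Y Z : Z \subset X -> Z \subset Y ->
  odd (symdist X Y) = odd #|X :\: Z| (+) odd #|Y :\: Z|.
Proof.
move=> sZX sZY; rewrite (cardsD_split X sZY) (cardsD_split Y sZX) setIC.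
by rewrite /symdist !oddD addbACA addbb addbF.
Qed.

End SymmetricDistance.

Lemma sum_signr_eq0_parity (I : finType) (A : {set I}) (f : I -> nat) :
  \sum_(i in A) (-1) ^+ f i = 0 :> int -> A != set0 ->
  forall b, exists2 i, i \in A & odd (f i) = b.
Proof.
move=> sum0 nzA b.
have [/exists_inP[i Ai /eqP]|/exists_inPn odd_nb] :=
  boolP [exists i in A, odd (f i) == b]; first by exists i.
move: sum0; rewrite (eq_bigr (fun=> (-1) ^+ (~~ b))) => [|i Ai]; last first.
  by rewrite -signr_odd; move: (odd_nb i Ai) => {odd_nb}; case: (odd (f i)); case: b.
by rewrite sumr_const => /eqP; rewrite mulrn_eq0 signr_eq0 orbF cards_eq0 (negbTE nzA).
Qed.

Section Downset.
Variables (T : finType) (I : {set {set T}}) (Z : {set T}).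
Hypothesis downI : is_downset I.
Local Notation G := (dot_alg [set principal X | X in I :\ Z]).
Local Notation IZ := [set Y in I | Z \subset Y].

Lemma dot_alg_powerset X : X \in I -> X != Z -> G (powerset X).
Proof. by move=> XI XZ; apply/dot_gen/imset_f; rewrite !inE XZ. Qed.

Lemma dot_alg_set1 X : X \in I -> ~~ (Z \subset X) -> G [set X].
Proof.
have [n] := ubnP #|X|; elim: n X => // n IHn X /ltnSE leXn XI nsZX.
have XZ : X != Z by apply: contraNneq nsZX => ->.
have -> : [set X] = powerset X :\: (powerset X :\ X).
  by rewrite setDDr setDv set0U; apply/esym/setIidPr; rewrite sub1set powersetE.
apply: (dot_sdiff (dot_alg_powerset XI XZ) _ (subD1set _ _)).
apply: dot_alg_singletons => Y; rewrite !inE => /andP[neYX sYX].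
have ltYX : Y \proper X by rewrite properEneq neYX.
apply: IHn; first exact: leq_trans (proper_card ltYX) leXn.
  exact: downI XI sYX.
by apply: contra nsZX => /subset_trans; apply.
Qed.

Lemma dot_alg_edge (W : {set T}) x :
  Z \subset W -> x \notin W -> x |: W \in I -> G [set W; x |: W].
Proof.
have [n] := ubnP #|W|; elim: n W => // n IHn W /ltnSE leWn sZW xW xWI.
have xZ : x \notin Z by apply: contra xW; apply: subsetP.
have xWZ : x |: W != Z by apply: contraNneq xZ => <-; rewrite setU11.
set R := powerset (x |: W) :\: [set W; x |: W].
have -> : [set W; x |: W] = powerset (x |: W) :\: R.
  rewrite setDDr setDv set0U; apply/esym/setIidPr.
  by rewrite subUset !sub1set !powersetE subsetUr subxx.
apply: (dot_sdiff (dot_alg_powerset xWI xWZ) _ (subsetDl _ _)).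
apply: (dot_alg_orbits (toggleK x)) => V; rewrite !inE.
  by rewrite toggle_sub ?setU11 // -(toggle_notin xW)
    !(can2_eq (toggleK x) (toggleK x)) toggleK orbC.
rewrite negb_or => /andP[/andP[neVW neVxW] sVxW].
have VYxY : V \in [set V :\ x; x |: (V :\ x)] by rewrite -toggle_set2 setU11.
rewrite toggle_set2; set Y := V :\ x in VYxY *.
have xY : x \notin Y by rewrite setD11.
have sYW : Y \subset W by rewrite subDset.
have xYI : x |: Y \in I by apply: downI xWI (setUS _ sYW).
have YI : Y \in I by apply: downI xYI (subsetUr _ _).
have neYW : Y != W by apply: contraTneq VYxY => ->; rewrite !inE negb_or neVW.
have [sZY|nsZY] := boolP (Z \subset Y).
  apply: IHn => //; apply: leq_trans (proper_card _) leWn.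
  by rewrite properEneq neYW.
have nsZxY : ~~ (Z \subset x |: Y).
  by rewrite -subDset (setDidPl _) // disjoint_sym disjoints1.
apply: dot_dunion; [exact: dot_alg_set1 | exact: dot_alg_set1 |].
by rewrite disjoints1 inE; apply: contraNneq xY => ->; apply: setU11.
Qed.

Lemma step_toward X Y : X \in IZ -> Y \in IZ -> X != Y ->
  exists2 X', X' \in IZ & G [set X; X'] /\ symdist X Y = (symdist X' Y).+1.
Proof.
rewrite !inE => /andP[XI sZX] /andP[YI sZY] neXY.
have [/set0Pn[x]|] := boolP (X :\: Y != set0).
  rewrite inE => /andP[xY xX].
  have xZ : x \notin Z by apply: contra xY; apply: subsetP.
  exists (X :\ x); first by rewrite !inE (downI XI (subD1set _ _)) subsetD1 sZX xZ.
  split; last exact: symdistD1.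
  rewrite setUC -{2}(setD1K xX); apply: dot_alg_edge; last by rewrite setD1K.
    by rewrite subsetD1 sZX.
  by rewrite setD11.
rewrite negbK setD_eq0 => sXY.
have [y] : exists y, y \in Y :\: X.
  by apply/set0Pn; rewrite setD_eq0; apply: contra neXY => sYX; rewrite eqEsubset sXY.
rewrite inE => /andP[yX yY].
have yXI : y |: X \in I by apply: downI YI _; rewrite subUset sub1set yY.
exists (y |: X); first by rewrite !inE yXI (subset_trans sZX (subsetUr _ _)).
by split; [exact: dot_alg_edge | exact: symdistU1].
Qed.

Lemma dot_alg_pair X Y : X \in IZ -> Y \in IZ -> odd (symdist X Y) ->
  G [set X; Y].
Proof.
have [n] := ubnP (symdist X Y).
elim: n X => // n IHn X /ltnSE leXYn XIZ YIZ oddXY.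
have neXY : X != Y by rewrite -symdist_eq0; apply: contraTneq oddXY => ->.
have [X1 X1IZ [GXX1 dXX1]] := step_toward XIZ YIZ neXY.
have [<-|neX1Y] := eqVneq X1 Y; first exact: GXX1.
have [X2 X2IZ [GX1X2 dX1X2]] := step_toward X1IZ YIZ neX1Y.
rewrite dXX1 dX1X2 /= negbK in oddXY leXYn.
apply: (dot_alg_path3 _ GXX1 GX1X2 (IHn _ _ X2IZ YIZ oddXY)); last by lia.
suff : uniq [seq symdist V Y | V <- [:: X; X1; X2; Y]] by apply: map_uniq.
have /eqP dYY : symdist Y Y == 0%N by rewrite symdist_eq0.
rewrite /= dXX1 dX1X2 dYY !inE.
by case: (symdist X2 Y) oddXY => // d _; lia.
Qed.

Lemma dot_alg_balanced (A : {set {set T}}) : A \subset IZ ->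
  \sum_(Y in A) (-1) ^+ #|Y :\: Z| = 0 :> int -> G A.
Proof.
pose Q (A : {set {set T}}) :=
  A \subset IZ /\ \sum_(Y in A) (-1) ^+ #|Y :\: Z| = 0 :> int.
move=> sAIZ sum0; apply: (dot_alg_peel (Q := Q)) (conj sAIZ sum0).
move=> {sAIZ sum0} A [sAIZ sum0] nzA.
have [X XA oddX] := sum_signr_eq0_parity sum0 nzA true.
have [Y YA evenY] := sum_signr_eq0_parity sum0 nzA false.
have neXY : X != Y by apply: contraTneq oddX => ->; rewrite evenY.
have sXYA : [set X; Y] \subset A by rewrite subUset !sub1set XA YA.
exists [set X; Y]; split => //.
- by apply/set0Pn; exists X; rewrite !inE eqxx.
- have /setIdP[_ sZX] := subsetP sAIZ X XA.
  have /setIdP[_ sZY] := subsetP sAIZ Y YA.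
  apply: dot_alg_pair; rewrite ?(subsetP sAIZ) //.
  by rewrite (odd_symdist sZX sZY) oddX evenY.
split; first exact: subset_trans (subsetDl _ _) sAIZ.
move: sum0; rewrite (big_setID [set X; Y]) (setIidPr sXYA) big_setU1 ?inE //.
rewrite big_set1 -[(-1) ^+ #|X :\: Z|]signr_odd -[(-1) ^+ #|Y :\: Z|]signr_odd.
by rewrite oddX evenY /= expr1 expr0 addNr add0r.
Qed.

End Downset.

Theorem theorem6p2 (T : finType) (I : {set {set T}}) (Z : {set T}) :
  is_downset I -> Z \in I -> mobius I Z = 0 ->
  dot_alg [set principal X | X in I :\ Z] I.
Proof.
move=> downI _ mobZ0; set IZ := [set Y in I | Z \subset Y].
have sIZI : IZ \subset I by apply/subsetP => Y; rewrite inE => /andP[].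
apply: (dot_alg_split sIZI).
  apply: dot_alg_balanced => //; rewrite -[RHS]mobZ0 mobiusE.
  by apply: eq_bigl => Y; rewrite inE.
apply: dot_alg_singletons => Y; rewrite !inE => /andP[nIZY YI].
by apply: dot_alg_set1 => //; rewrite YI in nIZY.
Qed.
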